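(* Let $n\geq 2$ and number the crossings of the $n$-twist loop $1,\dots,n$ in any fixed order. The set of words of the states of the $n$-twist loop consisting of exactly two closed curves is \[ \mathcal{T}_n=\left\{1^k01^{n-k-1}\;\middle|\; 0\leq k\leq n-1\right\}. \]
   Context: A (shadow) diagram is a finite collection of closed curves in the plane in general position whose only singularities are finitely many transverse double points, called crossings; over/under information is ignored. At a crossing four corners of complementary regions meet, forming two pairs of opposite corners. Splitting a crossing replaces a small neighbourhood of it by two disjoint arcs in one of two ways, each merging one pair of opposite corners into a channel. A state is the result of choosing a split at every crossing; it is a disjoint union of simple closed curves. The $n$-twist loop: take a horizontal row of $n$ crossings formed by two strands twisting around each other (consecutive crossings bound a bigon), and join the two left endpoints to each other by an arc and the two right endpoints to each other by an arc, creating no new crossings. At every crossing, the upper and lower corners belong to the unbounded region. The $A$-split at a crossing is the split merging its upper and lower corners (opening the channel through the unbounded region); the $B$-split merges its left and right corners. With crossings numbered $1,\dots,n$, a state is recorded by the binary word whose $i$-th letter is $0$ if an $A$-split is applied at crossing $i$ and $1$ if a $B$-split is applied. Notation: $\sigma^k$ denotes $k$ consecutive copies of the letter $\sigma$ (empty if $k\leq 0$), words are concatenated. *)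

From mathcomp Require Import all_boot all_fingroup.
Set Implicit Arguments. Unset Strict Implicit. Unset Printing Implicit Defensive.

(* Crossings are indexed by their geometric position 0..n-1, left to right.
   Each crossing has four arc-ends ("ports"), encoded by 'I_4:
     0 = NW, 1 = NE, 2 = SW, 3 = SE. *)
Definition port (n : nat) := ('I_n * 'I_4)%type.

(* The edges of the diagram (away from crossings), on nat-coded ports:
   the top arc of the bigon joins NE_i to NW_(i+1), the bottom arc joins
   SE_i to SW_(i+1); the left closing arc joins NW_0 to SW_0 and the right
   closing arc joins NE_(n-1) to SE_(n-1). *)
Definition ext_nat (n : nat) (p : nat * nat) : nat * nat :=
  let: (i, c) := p in
  match c with
  | 0 => if i == 0 then (0, 2) else (i.-1, 1)
  | 1 => if i == n.-1 then (i, 3) else (i.+1, 0)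
  | 2 => if i == 0 then (0, 0) else (i.-1, 3)
  | _ => if i == n.-1 then (i, 1) else (i.+1, 2)
  end.

Definition ext_rel (n : nat) : rel (port n) :=
  fun x y => ext_nat n (val x.1, val x.2) == (val y.1, val y.2).

(* Splitting a crossing.  false = A-split (merges upper and lower corners:
   the new arcs join NW-SW and NE-SE); true = B-split (merges left and right
   corners: the new arcs join NW-NE and SW-SE). *)
Definition split_nat (b : bool) (c : nat) : nat :=
  if b then match c with 0 => 1 | 1 => 0 | 2 => 3 | _ => 2 end
  else match c with 0 => 2 | 2 => 0 | 1 => 3 | _ => 1 end.

Definition split_rel (n : nat) (s : 'I_n -> bool) : rel (port n) :=
  fun x y => (x.1 == y.1) && (split_nat (s x.1) (val x.2) == val y.2).

(* The state as a union of two perfect matchings on ports; its closed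
   curves are the connected components of this (symmetric) relation. *)
Definition state_rel (n : nat) (s : 'I_n -> bool) : rel (port n) :=
  fun x y => ext_rel x y || split_rel s x y.

Definition ncurves (n : nat) (s : 'I_n -> bool) : nat :=
  n_comp (state_rel s) predT.

Definition twist_T (n : nat) : {set n.-tuple bool} :=
  [set w : n.-tuple bool |
    [exists k : 'I_n, tval w == nseq k true ++ false :: nseq (n - k.+1) true]].

From mathcomp Require Import all_boot all_fingroup zify.
Set Implicit Arguments. Unset Strict Implicit. Unset Printing Implicit Defensive.

(* Cut the twist loop at the gaps 0, ..., n between its crossings, gap i lying
   just left of crossing i and gap n right of the last one.  Every arc of a
   state stays within one gap, except the two arcs of a B-split at crossing i,
   which join gap i to gap i + 1; and the upper and lower ports of a gap always
   lie on one curve.  Hence two ports lie on the same curve iff no A-split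
   separates their gaps, so a state has one curve more than it has A-splits,
   whatever the numbering: two curves means exactly one letter 0. *)

Lemma n_comp_levels (T : finType) (e : rel T) (f : T -> nat) m :
  (forall x y, connect e x y = (f x == f y)) ->
  (forall x, f x <= m) -> (forall j, j <= m -> exists x, f x = j) ->
  n_comp e predT = m.+1.
Proof.
move=> conn_f f_le f_onto.
have sym_e : connect_sym e by move=> x y; rewrite !conn_f eq_sym.
pose g x : 'I_m.+1 := inord (f x).
have gK x : g x = f x :> nat by rewrite inordK // ltnS.
rewrite /n_comp_mem.
have -> : #|predI (roots e) (mem predT)| = #|[set x | roots e x]|.
  by apply: eq_card => x; rewrite !inE andbT.
rewrite -(card_in_imset (f := g)); last first.
  move=> x y; rewrite !inE => /eqP rx /eqP ry /(congr1 val); rewrite /= !gK.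
  by move/eqP; rewrite -conn_f => /(rootP sym_e); rewrite rx ry.
rewrite -[RHS]card_ord; apply: eq_card => j; rewrite inE.
have [x fx] := f_onto j (ltn_ord j).
apply/imsetP; exists (root e x); first by rewrite inE; exact: roots_root.
by apply: val_inj; rewrite /= gK -fx; apply/eqP; rewrite -conn_f connect_root.
Qed.

Lemma connect_plateau (T : finType) (e : rel T) (p : nat -> T) (h : nat -> nat) M :
  {homo h : a b / a <= b} ->
  (forall b, b < M -> h b = h b.+1 -> connect e (p b) (p b.+1)) ->
  forall a b, a <= b <= M -> h a = h b -> connect e (p a) (p b).
Proof.
move=> h_mono step a b /andP[le_ab]; rewrite -(subnKC le_ab).
elim: (b - a) => [|d IHd]; rewrite ?addn0 // addnS => le_bM h_eq.
have h_ad : h a = h (a + d).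
  apply/eqP; rewrite eqn_leq h_mono ?leq_addr //= h_eq h_mono // leqnSn.
apply: connect_trans (IHd (ltnW le_bM) h_ad) (step _ le_bM _).
by rewrite -h_ad.
Qed.

Lemma nat_ivt (h : nat -> nat) :
  h 0 = 0 -> (forall b, h b.+1 <= (h b).+1) ->
  forall j B, j <= h B -> exists2 b, b <= B & h b = j.
Proof.
move=> h0 h_step j; elim=> [|B IHB] le_jB.
  by exists 0 => //; move: le_jB; rewrite h0 leqn0 => /eqP->.
have [/IHB[b le_bB hb] | lt_Bj] := leqP j (h B); first by exists b => //; apply: leqW.
by exists B.+1 => //; apply/eqP; rewrite eqn_leq le_jB (leq_trans (h_step B)).
Qed.

Lemma ext_natK N i c : 0 < N -> i < N -> c < 4 ->
  ext_nat N (ext_nat N (i, c)) = (i, c).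
Proof.
case: N => // N _ lt_iN.
case: c => [|[|[|[|c]]]] //= _; do ?[by case: eqP => [->|] /=; rewrite ?eqxx].
all: by case: i lt_iN => [|i] //= lt_iN; rewrite ifN //; apply/eqP; lia.
Qed.

Lemma gap_ext_nat N i c : i < N -> c < 4 ->
  i + odd c = (ext_nat N (i, c)).1 + odd (ext_nat N (i, c)).2.
Proof.
move=> lt_iN; case: c => [|[|[|[|c]]]] //= _; do ?[by case: eqP; rewrite /= ?addn1 ?addn0].
all: by case: i lt_iN => [|i] //=; rewrite addn1 addn0.
Qed.

Lemma split_natK b c : c < 4 -> split_nat b (split_nat b c) = c.
Proof. by case: b; case: c => [|[|[|[|c]]]]. Qed.

Lemma odd_split_nat_A c : c < 4 -> odd (split_nat false c) = odd c.
Proof. by case: c => [|[|[|[|c]]]]. Qed.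

Section TwistState.

Variables (n : nat) (s : 'I_n.+1 -> bool).
Local Notation N := n.+1.
Local Notation connect_state := (connect (state_rel s)).

(* The split at a crossing position given as a natural number; positions out
   of range count as B-splits so that [countA] stops growing there. *)
Definition split_at (i : nat) : bool :=
  if @insub _ (fun k => k < N) _ i is Some j then s j else true.

Definition countA (k : nat) : nat := count (fun i => ~~ split_at i) (iota 0 k).

Lemma split_atE (i : 'I_N) : split_at i = s i.
Proof. by rewrite /split_at valK. Qed.

Lemma countAS k : countA k.+1 = countA k + ~~ split_at k.
Proof. by rewrite /countA -addn1 iotaD count_cat /= addn0. Qed.

Lemma countA_mono : {homo countA : a b / a <= b}.
Proof. by move=> a b /subnKC <-; rewrite /countA iotaD count_cat leq_addr. Qed.

Lemma countA_card : countA N = #|[set p | ~~ s p]|.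
Proof.
rewrite /countA -val_enum_ord count_map enumT cardsE cardE /enum_mem size_filter.
by apply: eq_count => i; rewrite /= split_atE.
Qed.

Definition port_at (i c : nat) : port N := (inord i, inord c).

Lemma port_atE (x : port N) : port_at x.1 x.2 = x.
Proof. by rewrite /port_at !inord_val; case: x. Qed.

Lemma state_rel_port_at i c j d : i < N -> c < 4 -> j < N -> d < 4 ->
  state_rel s (port_at i c) (port_at j d) =
  (ext_nat N (i, c) == (j, d)) || (i == j) && (split_nat (s (inord i)) c == d).
Proof.
move=> lt_iN lt_c4 lt_jN lt_d4.
rewrite /state_rel /ext_rel /split_rel /port_at /= !inordK //.
congr (_ || (_ && _)).
by apply/eqP/eqP => [/(congr1 val)|->]; rewrite /= ?inordK.
Qed.

Lemma state_rel_sym : symmetric (state_rel s).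
Proof.
move=> x y; rewrite /state_rel; congr orb.
  by rewrite /ext_rel; apply/eqP/eqP => <-; rewrite ext_natK ?ltn_ord.
rewrite /split_rel [y.1 == _]eq_sym.
by apply/andP/andP => -[/eqP-> /eqP<-]; rewrite split_natK ?ltn_ord.
Qed.

Lemma state_connect_sym : connect_sym (state_rel s).
Proof. exact: sym_connect_sym state_rel_sym. Qed.

Lemma connect_state_rel_sym (x y : port N) : state_rel s x y -> connect_state y x.
Proof. by rewrite state_rel_sym; apply: connect1. Qed.

Definition gap (x : port N) : nat := x.1 + odd x.2.

Definition level (x : port N) : nat := countA (gap x).

Lemma level_state_rel (x y : port N) : state_rel s x y -> level x = level y.
Proof.
case/orP => [/eqP ext_xy | ].
  by rewrite /level /gap (gap_ext_nat (ltn_ord x.1) (ltn_ord x.2)) ext_xy.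
case: x y => [i [c lt_c4]] [j [d lt_d4]] /andP[/= /eqP <- /eqP split_cd].
rewrite /level /gap /= -split_cd; case s_i: (s i); last by rewrite odd_split_nat_A.
have countA_i : countA i.+1 = countA i by rewrite countAS split_atE s_i addn0.
by case: c lt_c4 {split_cd} => [|[|[|[|c]]]] //= _; rewrite ?addn0 ?addn1.
Qed.

Lemma left_arc : state_rel s (port_at 0 0) (port_at 0 2).
Proof. by rewrite state_rel_port_at. Qed.

Lemma right_arc : state_rel s (port_at n 1) (port_at n 3).
Proof. by rewrite state_rel_port_at //= !eqxx. Qed.

Lemma top_arc i : i.+1 < N -> state_rel s (port_at i.+1 0) (port_at i 1).
Proof. by move=> lt_iN; rewrite state_rel_port_at //= ?eqxx // ltnW. Qed.

Lemma bottom_arc i : i.+1 < N -> state_rel s (port_at i.+1 2) (port_at i 3).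
Proof. by move=> lt_iN; rewrite state_rel_port_at //= ?eqxx // ltnW. Qed.

Lemma A_arcs i : i < N -> s (inord i) = false ->
  state_rel s (port_at i 1) (port_at i 3) /\ state_rel s (port_at i 0) (port_at i 2).
Proof. by move=> lt_iN s_i; rewrite !state_rel_port_at // s_i eqxx !orbT. Qed.

Lemma B_arcs i : i < N -> s (inord i) = true ->
  state_rel s (port_at i 0) (port_at i 1) /\ state_rel s (port_at i 2) (port_at i 3).
Proof. by move=> lt_iN s_i; rewrite !state_rel_port_at // s_i eqxx !orbT. Qed.

Lemma connect_west i : i < N -> connect_state (port_at i 0) (port_at i 2).
Proof.
elim: i => [|i IHi] lt_iN; first exact: connect1 left_arc.
have lt_i'N : i < N by apply: ltnW.
apply: connect_trans (connect1 (top_arc lt_iN)) _.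
rewrite state_connect_sym; apply: connect_trans (connect1 (bottom_arc lt_iN)) _.
case s_i: (s (inord i)); last exact: connect_state_rel_sym (A_arcs lt_i'N s_i).1.
have [NW_NE SW_SE] := B_arcs lt_i'N s_i.
apply: connect_trans (connect_state_rel_sym SW_SE) _.
rewrite state_connect_sym in IHi.
exact: connect_trans (IHi lt_i'N) (connect1 NW_NE).
Qed.

Lemma connect_east i : i < N -> connect_state (port_at i 1) (port_at i 3).
Proof.
move=> lt_iN; move: (subnKC (lt_iN : i <= n)); move: (n - i) => k.
elim: k i {lt_iN} => [|k IHk] i def_n.
  by rewrite addn0 in def_n; rewrite def_n; apply: connect1 right_arc.
have lt_iN : i.+1 < N by lia.
apply: connect_trans (connect_state_rel_sym (top_arc lt_iN)) _.
rewrite state_connect_sym; apply: connect_trans (connect_state_rel_sym (bottom_arc lt_iN)) _.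
rewrite state_connect_sym.
case s_i: (s (inord i.+1)); last exact: connect1 (A_arcs lt_iN s_i).2.
have [NW_NE SW_SE] := B_arcs lt_iN s_i.
have east_i : connect_state (port_at i.+1 1) (port_at i.+1 3) by apply: IHk; lia.
exact: connect_trans (connect1 NW_NE) (connect_trans east_i (connect_state_rel_sym SW_SE)).
Qed.

Lemma connect_gap_top (x : port N) : connect_state x (port_at x.1 (odd x.2)).
Proof.
rewrite -{1}(port_atE x).
move: (ltn_ord x.2) (ltn_ord x.1); case: (nat_of_ord x.2) => [|[|[|[|c]]]] //= _ lt_x1N.
- by rewrite state_connect_sym connect_west.
- by rewrite state_connect_sym connect_east.
Qed.

(* The top ports NW_0, NE_0, NW_1, NE_1, ..., NE_n, numbered from 0 to 2n+1. *)
Definition top_port (b : nat) : port N := port_at b./2 (odd b).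

Definition top_index (x : port N) : nat := x.1.*2 + odd x.2.

Lemma top_port_double i : top_port i.*2 = port_at i 0.
Proof. by rewrite /top_port doubleK odd_double. Qed.

Lemma top_port_doubleS i : top_port i.*2.+1 = port_at i 1.
Proof. by rewrite /top_port /= uphalf_double odd_double. Qed.

Lemma port_at_top_index (x : port N) : port_at x.1 (odd x.2) = top_port (top_index x).
Proof.
by rewrite /top_index; case: (odd x.2); rewrite ?addn1 ?addn0 ?top_port_doubleS ?top_port_double.
Qed.

Lemma gap_top_index (x : port N) : gap x = uphalf (top_index x).
Proof.
by rewrite /gap /top_index; case: (odd x.2); rewrite ?addn1 ?addn0 /= ?doubleK ?uphalf_double.
Qed.

Lemma top_index_bound (x : port N) : top_index x <= n.*2.+1.
Proof.
by rewrite /top_index; have := ltn_ord x.1; have := leq_b1 (odd x.2); rewrite -!muln2; lia.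
Qed.

Lemma countA_uphalf_mono : {homo (fun b => countA (uphalf b)) : a b / a <= b}.
Proof. by move=> a b /uphalf_leq; apply: countA_mono. Qed.

Lemma countA_uphalfS b : countA (uphalf b.+1) <= (countA (uphalf b)).+1.
Proof.
apply: (@leq_trans (countA (uphalf b).+1)).
  by apply: countA_mono; rewrite /= ltnS uphalf_half leq_addl.
by rewrite countAS -addn1 leq_add2l leq_b1.
Qed.

Lemma top_portK b : b <= n.*2.+1 -> top_index (top_port b) = b.
Proof.
move=> le_b; rewrite /top_index /top_port /port_at /= !inordK ?oddb.
- by rewrite addnC odd_double_half.
- by case: (odd b).
- by move: le_b; rewrite -divn2 -muln2; lia.
Qed.

Lemma level_top_port b : b <= n.*2.+1 -> level (top_port b) = countA (uphalf b).
Proof. by move=> le_b; rewrite /level gap_top_index top_portK. Qed.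

Lemma connect_top_step b : b < n.*2.+1 ->
  countA (uphalf b) = countA (uphalf b.+1) -> connect_state (top_port b) (top_port b.+1).
Proof.
rewrite -(odd_double_half b); case: (odd b) => /=; set i := b./2 => lt_b.
  rewrite add1n -doubleS top_port_doubleS top_port_double => _.
  by apply: connect_state_rel_sym; apply: top_arc; move: lt_b; rewrite -!muln2; lia.
rewrite add0n top_port_doubleS top_port_double /= doubleK uphalf_double countAS.
rewrite -{1}[countA i]addn0 => /eqP; rewrite eqn_add2l eq_sym eqb0 negbK => s_i.
have lt_iN : i < N by move: lt_b; rewrite -!muln2; lia.
rewrite -(inordK lt_iN) split_atE in s_i.
exact: connect1 (B_arcs lt_iN s_i).1.
Qed.

Lemma connect_state_level (x y : port N) : connect_state x y = (level x == level y).
Proof.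
apply/idP/eqP => [|eq_xy].
  case/connectP => p + ->; elim: p x => [|z p IHp] x //=.
  by case/andP => /level_state_rel-> /IHp.
wlog le_xy : x y eq_xy / top_index x <= top_index y.
  move=> wlog_le; case: (leqP (top_index x) (top_index y)) => [|/ltnW]; first exact: wlog_le.
  by rewrite state_connect_sym; apply: wlog_le.
apply: connect_trans (connect_gap_top x) _.
rewrite state_connect_sym; apply: connect_trans (connect_gap_top y) _.
rewrite state_connect_sym !port_at_top_index.
apply: (connect_plateau countA_uphalf_mono connect_top_step).
  by rewrite le_xy top_index_bound.
by rewrite /level !gap_top_index in eq_xy.
Qed.

Lemma ncurves_twist : ncurves s = #|[set p | ~~ s p]|.+1.
Proof.
have uphalf_top : uphalf n.*2.+1 = N by rewrite /= doubleK.
rewrite -countA_card -[in countA N]uphalf_top; apply: n_comp_levels connect_state_level _ _.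
  by move=> x; apply: countA_mono; rewrite gap_top_index uphalf_leq ?top_index_bound.
move=> j /(nat_ivt (erefl 0) countA_uphalfS)[b le_b <-].
by exists (top_port b); rewrite level_top_port.
Qed.

End TwistState.

Lemma count_negb0 (t : seq bool) : count negb t = 0 -> t = nseq (size t) true.
Proof. by elim: t => [|[] t IHt] //= /IHt {1}->. Qed.

Lemma mem_twist_T N (w : N.-tuple bool) : (w \in twist_T N) = (count negb w == 1).
Proof.
rewrite inE; apply/existsP/eqP => [[k /eqP->]|count_w].
  by rewrite count_cat /= !count_nseq /= !mul0n.
have w_false : false \in tval w.
  by have /hasP[[]] : has negb w by rewrite has_count count_w.
have lt_kN : index false w < N by rewrite -{2}(size_tuple w) index_mem.
exists (Ordinal lt_kN); apply/eqP => /=; set k := index false w.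
have def_w : tval w = take k w ++ false :: drop k.+1 w.
  by rewrite -[in LHS](cat_take_drop k w) (drop_nth false) ?index_mem // nth_index.
move: count_w; rewrite def_w count_cat /= => count_w.
have /count_negb0 {1}-> : count negb (take k w) = 0 by lia.
have /count_negb0 {1}-> : count negb (drop k.+1 w) = 0 by lia.
by rewrite size_drop size_tuple size_takel // size_tuple ltnW.
Qed.

Lemma card_tnth_false N (w : N.-tuple bool) : #|[set i | ~~ tnth w i]| = count negb w.
Proof.
rewrite -[in RHS](map_tnth_enum w) count_map enumT cardsE cardE /enum_mem size_filter.
by apply: eq_count.
Qed.

Theorem proposition21 (n : nat) (hn : 2 <= n) (num : {perm 'I_n}) :
  [set w : n.-tuple bool | ncurves (fun p : 'I_n => tnth w (num p)) == 2]
  = twist_T n.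
Proof.
case: n hn num => [//|n] _ num.
apply/setP => w; rewrite mem_twist_T inE ncurves_twist eqSS -card_tnth_false.
suff -> : [set p | ~~ tnth w (num p)] = num @^-1: [set i | ~~ tnth w i].
  by rewrite card_preimset //; apply: perm_inj.
by apply/setP => p; rewrite !inE.
Qed.
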